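(* On $V_N$ (with the $H_n(N/n)$-action $\zeta_N$) one has $\mathbf h=H$, $\mathbf e=\frac NnE$, $\mathbf f=\frac nNF$, where $\mathbf h=\frac12\sum_i(\mathrm x_i\mathrm y_i+\mathrm y_i\mathrm x_i)$, $\mathbf e=\frac12\sum_i\mathrm y_i^2$, $\mathbf f=\frac12\sum_i\mathrm x_i^2$, and $H=\sum_pb_p\frac{\partial}{\partial b_p}+\frac{\dim\mathfrak g}2$, $F=\frac12\sum_pb_p^2$, $E=\frac12\Delta_{\mathfrak g}$ act on the $\mathbb C[\mathfrak g]$ factor.
   Context: $N$ divides $n$, $\mathfrak g=\mathfrak{sl}_N(\mathbb C)$, $V_N=(\mathbb C[\mathfrak g]\otimes(\mathbb C^N)^{\otimes n})^{\mathfrak g}$. $\{b_p\}$ is an orthonormal basis of $\mathfrak g$ for the trace form; $b_p$ also denotes the corresponding linear coordinate function (multiplication operator) on $\mathfrak g$, $\partial/\partial b_p$ the directional derivative, and $\Delta_{\mathfrak g}=\sum_p\partial^2/\partial b_p^2$ the Laplacian. $H_n(k)$ is the rational Cherednik algebra of type $A_{n-1}$ (quotient of $\mathbb C[S_n]\ltimes\mathbb C\langle\mathrm x_i,\mathrm y_i\rangle$ by $\sum\mathrm x_i=\sum\mathrm y_i=0$, $[\mathrm x_i,\mathrm x_j]=[\mathrm y_i,\mathrm y_j]=0$, $[\mathrm x_i,\mathrm y_j]=\frac1n-ks_{ij}$ for $i\ne j$), acting on $V_N$ via $\zeta_N$: $s_{ij}$ permutes tensor factors, $(\mathrm x_if)(A)=A_if(A)$,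 $(\mathrm y_if)(A)=\frac Nn\sum_p(b_p)_i\frac{\partial f}{\partial b_p}(A)$, where $B_i$ is $B$ acting on the $i$-th factor of $(\mathbb C^N)^{\otimes n}$. *)

From HB Require Import structures.
From mathcomp Require Import all_boot all_order all_algebra.
From mathcomp Require Import mpoly.
Set Implicit Arguments. Unset Strict Implicit. Unset Printing Implicit Defensive.
Import Order.TTheory GRing.Theory Num.Theory.
Local Open Scope ring_scope.

(* C[g] (x) (C^N)^{(x) n} is modelled as functions from multi-indices
   J : 'I_n -> 'I_N (basis e_{J 0} (x) ... (x) e_{J (n-1)}) to polynomials in the
   dim g = N^2 - 1 linear coordinates b_p (the mpoly variable 'X_p is the
   coordinate function b_p, i.e. A = \sum_p 'X_p(A) b_p). *)

Definition dimg (N : nat) : nat := (N ^ 2 - 1)%N.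

Definition tens (C : numClosedFieldType) (N n : nat) :=
  {ffun {ffun 'I_n -> 'I_N} -> {mpoly C[dimg N]}}.

Section Ops.
Variables (C : numClosedFieldType) (N n : nat).
Variable b : 'I_(dimg N) -> 'M[C]_N.
Local Notation T := (tens C N n).

Definition upd (J : {ffun 'I_n -> 'I_N}) (i : 'I_n) (k : 'I_N) :
  {ffun 'I_n -> 'I_N} := [ffun j => if j == i then k else J j].

Definition actAt (B : 'M[C]_N) (i : 'I_n) (f : T) : T :=
  [ffun J : {ffun 'I_n -> 'I_N} => \sum_(k < N) B (J i) k *: f (upd J i k)].

Definition mulP (p : {mpoly C[dimg N]}) (f : T) : T := [ffun J : {ffun 'I_n -> 'I_N} => p * f J].

Definition dP (p : 'I_(dimg N)) (f : T) : T := [ffun J : {ffun 'I_n -> 'I_N} => mderiv p (f J)].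

(* zeta_N(x_i) f (A) = A_i f(A),  A_i = \sum_q b_q(A) (b_q)_i *)
Definition xop (i : 'I_n) (f : T) : T := \sum_q mulP 'X_q (actAt (b q) i f).

(* zeta_N(y_i) f = N/n \sum_p (b_p)_i d f / d b_p *)
Definition yop (i : 'I_n) (f : T) : T :=
  ((N%:R / n%:R : C) *: \sum_p actAt (b p) i (dP p f)).

Definition hop (f : T) : T := 2^-1 *: \sum_i (xop i (yop i f) + yop i (xop i f)).
Definition eop (f : T) : T := 2^-1 *: \sum_i yop i (yop i f).
Definition fop (f : T) : T := 2^-1 *: \sum_i xop i (xop i f).

Definition Hop (f : T) : T :=
  \sum_p mulP 'X_p (dP p f) + ((dimg N)%:R / 2) *: f.
Definition Eop (f : T) : T := 2^-1 *: \sum_p dP p (dP p f).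
Definition Fop (f : T) : T := 2^-1 *: \sum_p mulP ('X_p * 'X_p) f.

(* g-invariance of f in C[g] (x) (C^N)^{(x) n}: for every X in sl_N,
   (\sum_i X_i) f(A) = D f(A)[[X, A]], where (as A = \sum_q b_q(A) b_q and the
   basis is orthonormal) the p-th coordinate of [X, A] is
   \sum_q tr([X, b_q] b_p) b_q(A). *)
Definition g_invariant (f : T) : Prop :=
  forall X : 'M[C]_N, \tr X = 0 ->
    \sum_i actAt X i f =
    \sum_p mulP (\sum_q \tr ((X *m b q - b q *m X) *m b p) *: 'X_q) (dP p f).

End Ops.

From HB Require Import structures.
From mathcomp Require Import all_boot all_order all_algebra.
From mathcomp Require Import mpoly.
From mathcomp Require Import zify ring.
Import Order.TTheory GRing.Theory Num.Theory.
Local Open Scope ring_scope.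
Set Implicit Arguments. Unset Strict Implicit.

(* Every generator is a sum over the tensor factors i of products of the
   operators A_i (multiplication by the generic element A = \sum_q b_q(A) b_q)
   and (b_p)_i d/d b_p, so each of h, e, f reduces to expressions
   \sum_i M_i g with M a product of two basis matrices and g = f or a
   derivative of f.  Invariance, applied to the traceless part of M, turns
   \sum_i M_i f into (n tr M / N) f plus a first-order term along [M, A].
   Orthonormality makes tr (b_p b_q) a Kronecker delta, which yields the
   right-hand sides, while the first-order terms cancel after summation
   because their coefficients are differences of traces of words in the b's
   exchanged by cyclicity of the trace and a permutation of summation indices.
   The constant dim g / 2 in H comes from the Casimir element
   \sum_p b_p^2 = (dim g / N) 1, a consequence of the completeness relation
   of the orthonormal basis. *)

Lemma mderiv_mpolyX (R : comRingType) k (p q : 'I_k) :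
  mderiv p ('X_q : {mpoly R[k]}) = (q == p)%:R%:MP.
Proof.
rewrite mderivX mnm1E; case: eqP=> [->|_]; last by rewrite scale0r mpolyC0.
have -> : (U_(p) - U_(p) = 0)%MM by apply/mnmP=> j; rewrite mnmBE subnn mnm0E.
by rewrite scale1r mpolyX0 mpolyC1.
Qed.

Section TensorOperators.
Variables (C : numClosedFieldType) (N n : nat).
Local Notation T := (tens C N n).
Local Notation P := {mpoly C[dimg N]}.

Lemma actAt_is_linear (B : 'M[C]_N) i : linear (@actAt C N n B i).
Proof.
move=> a f g; apply/ffunP=> J; rewrite !ffunE scaler_sumr -big_split /=.
by apply: eq_bigr=> k _; rewrite !ffunE scalerDr !scalerA mulrC.
Qed.
HB.instance Definition _ B i :=
  GRing.isLinear.Build C T T *:%R (@actAt C N n B i) (actAt_is_linear B i).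

Lemma mulP_is_linear (p : P) : linear (@mulP C N n p).
Proof. by move=> a f g; apply/ffunP=> J; rewrite !ffunE mulrDr scalerAr. Qed.
HB.instance Definition _ p :=
  GRing.isLinear.Build C T T *:%R (@mulP C N n p) (mulP_is_linear p).

Lemma dP_is_linear p : linear (@dP C N n p).
Proof. by move=> a f g; apply/ffunP=> J; rewrite !ffunE mderivD mderivZ. Qed.
HB.instance Definition _ p :=
  GRing.isLinear.Build C T T *:%R (@dP C N n p) (dP_is_linear p).

Lemma actAtDl (B B' : 'M[C]_N) i (f : T) :
  actAt (B + B') i f = actAt B i f + actAt B' i f.
Proof.
by apply/ffunP=> J; rewrite !ffunE -big_split; apply: eq_bigr=> k _; rewrite mxE scalerDl.
Qed.

Lemma actAtZl c (B : 'M[C]_N) i (f : T) : actAt (c *: B) i f = c *: actAt B i f.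
Proof.
by apply/ffunP=> J; rewrite !ffunE scaler_sumr; apply: eq_bigr=> k _; rewrite mxE scalerA.
Qed.

Lemma actAtNl (B : 'M[C]_N) i (f : T) : actAt (- B) i f = - actAt B i f.
Proof. by rewrite -scaleN1r actAtZl scaleN1r. Qed.

Lemma actAt_suml I r (Q : pred I) (F : I -> 'M[C]_N) i (f : T) :
  actAt (\sum_(k <- r | Q k) F k) i f = \sum_(k <- r | Q k) actAt (F k) i f.
Proof.
apply: (big_ind2 (fun B g => actAt B i f = g)) => //; last first.
  by move=> B1 B2 g1 g2 <- <-; rewrite actAtDl.
by apply/ffunP=> J; rewrite !ffunE big1 // => k _; rewrite mxE scale0r.
Qed.

Lemma upd_upd (J : {ffun 'I_n -> 'I_N}) i k l : upd (upd J i k) i l = upd J i l.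
Proof. by apply/ffunP=> j; rewrite !ffunE; case: eqP. Qed.

Lemma upd_id (J : {ffun 'I_n -> 'I_N}) i : upd J i (J i) = J.
Proof. by apply/ffunP=> j; rewrite !ffunE; case: eqP=> // ->. Qed.

Lemma actAtM (B B' : 'M[C]_N) i (f : T) :
  actAt B i (actAt B' i f) = actAt (B *m B') i f.
Proof.
apply/ffunP=> J; rewrite !ffunE.
under eq_bigr=> k _ do rewrite ffunE ffunE eqxx scaler_sumr.
rewrite exchange_big /=; apply: eq_bigr=> l _.
by rewrite mxE scaler_suml; apply: eq_bigr=> k _; rewrite upd_upd scalerA.
Qed.

Lemma actAt_scalar c i (f : T) : actAt c%:M i f = c *: f.
Proof.
apply/ffunP=> J; rewrite !ffunE (bigD1 (J i)) //= big1 ?addr0.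
  by rewrite mxE eqxx mulr1n upd_id.
by move=> k /negPf nk; rewrite mxE eq_sym nk mulr0n scale0r.
Qed.

Lemma actAt_mulP (B : 'M[C]_N) i p (f : T) :
  actAt B i (mulP p f) = mulP p (actAt B i f).
Proof.
apply/ffunP=> J; rewrite !ffunE mulr_sumr.
by apply: eq_bigr=> k _; rewrite ffunE scalerAr.
Qed.

Lemma actAt_dP (B : 'M[C]_N) i p (f : T) : actAt B i (dP p f) = dP p (actAt B i f).
Proof.
apply/ffunP=> J; rewrite !ffunE raddf_sum /=.
by apply: eq_bigr=> k _; rewrite ffunE mderivZ.
Qed.

Lemma mulPM p q (f : T) : mulP p (mulP q f) = mulP (p * q) f.
Proof. by apply/ffunP=> J; rewrite !ffunE mulrA. Qed.

Lemma mulP_suml I r (Q : pred I) (F : I -> P) (f : T) :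
  mulP (\sum_(k <- r | Q k) F k) f = \sum_(k <- r | Q k) mulP (F k) f.
Proof.
elim/big_rec2: _ => [|k p g _ <-]; apply/ffunP=> J; rewrite !ffunE ?mul0r //.
by rewrite mulrDl.
Qed.

Lemma mulPZl c p (f : T) : mulP (c *: p) f = c *: mulP p f.
Proof. by apply/ffunP=> J; rewrite !ffunE scalerAl. Qed.

Lemma mulP_mpolyC c (f : T) : mulP c%:MP f = c *: f.
Proof. by apply/ffunP=> J; rewrite !ffunE mul_mpolyC. Qed.

Lemma dP_mulP r p (f : T) : dP r (mulP p f) = mulP (mderiv r p) f + mulP p (dP r f).
Proof. by apply/ffunP=> J; rewrite !ffunE mderivM. Qed.

Lemma dP_comm p q (f : T) : dP p (dP q f) = dP q (dP p f).
Proof. by apply/ffunP=> J; rewrite !ffunE mderiv_comm. Qed.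

Lemma mulP_sumr p J (r : seq J) (Q : pred J) (F : J -> T) :
  mulP p (\sum_(i <- r | Q i) F i) = \sum_(i <- r | Q i) mulP p (F i).
Proof. exact: linear_sum. Qed.

Lemma actAt_sumr B i J (r : seq J) (Q : pred J) (F : J -> T) :
  actAt B i (\sum_(k <- r | Q k) F k) = \sum_(k <- r | Q k) actAt B i (F k).
Proof. exact: linear_sum. Qed.

Lemma dP_sumr p J (r : seq J) (Q : pred J) (F : J -> T) :
  dP p (\sum_(k <- r | Q k) F k) = \sum_(k <- r | Q k) dP p (F k).
Proof. exact: linear_sum. Qed.

Lemma mulP0l (g : T) : mulP 0 g = 0.
Proof. by apply/ffunP=> J; rewrite !ffunE mul0r. Qed.

End TensorOperators.

Lemma natr_gt0_neq0 (R : numDomainType) k : (0 < k)%N -> (k%:R : R) != 0.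
Proof. by rewrite pnatr_eq0 -lt0n. Qed.

Lemma sum_mxvec_mul (R : pzRingType) k (A B : 'M[R]_k) :
  \sum_(x < k * k) mxvec A 0 x * mxvec B 0 x = \sum_i \sum_j A i j * B i j.
Proof.
rewrite (reindex _ (curry_mxvec_bij _ _)) /= pair_bigA.
by apply: eq_bigr => [[i j]] _ /=; rewrite !mxvecE.
Qed.

Lemma mulmx1C_eqdim (R : comUnitRingType) m k (A : 'M[R]_(m, k)) (B : 'M[R]_(k, m)) :
  m = k -> A *m B = 1%:M -> B *m A = 1%:M.
Proof. by move=> ekm; subst k; apply: mulmx1C. Qed.

Lemma widen_ordS_lift k (p : 'I_k) : widen_ord (leqnSn k) p = lift ord_max p.
Proof. by apply: val_inj; rewrite /= /bump leqNgt ltn_ord. Qed.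

Section Completeness.
Variables (C : numClosedFieldType) (N : nat) (b : 'I_(dimg N) -> 'M[C]_N).
Hypotheses (N_gt0 : (0 < N)%N) (b_tr : forall p, \tr (b p) = 0)
  (b_orthonormal : forall p q, \tr (b p *m b q) = (p == q)%:R).

Local Notation m := (dimg N).+1.

Definition ext_basis (k : 'I_m) : 'M[C]_N :=
  if unlift ord_max k is Some p then b p else 1%:M.

Definition ext_norm (k : 'I_m) : C := if k == ord_max then N%:R else 1.

Lemma ext_basis_gram k l : \tr (ext_basis k *m ext_basis l) = (k == l)%:R * ext_norm k.
Proof.
have lift_max_neq p : (lift ord_max p == ord_max) = false.
  by rewrite eq_sym (negPf (neq_lift _ _)).
rewrite /ext_basis /ext_norm; case: unliftP => [p ->|->]; case: unliftP => [q ->|->].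
- by rewrite b_orthonormal (inj_eq (@lift_inj _ _)) lift_max_neq mulr1.
- by rewrite mulmx1 b_tr lift_max_neq mul0r.
- by rewrite mul1mx b_tr (negPf (neq_lift _ _)) mul0r.
- by rewrite mulmx1 mxtrace1 !eqxx mul1r.
Qed.

Lemma ext_basis_card : m = (N * N)%N.
Proof. by rewrite /dimg; case: N N_gt0 => // k _; rewrite expnS expn1 /=; lia. Qed.

(* The square matrix whose rows are the entries of the extended basis has
   orthogonal rows, hence orthogonal columns. *)
Lemma basis_completeness i j k l :
  \sum_p b p i j * b p k l + N%:R^-1 * ((i == j)%:R * (k == l)%:R)
  = ((j == k) && (i == l))%:R.
Proof.
pose Bm : 'M[C]_(m, N * N) := \matrix_(k, x) mxvec (ext_basis k) 0 x.
pose Bt : 'M[C]_(N * N, m) := \matrix_(x, k) mxvec (ext_basis k)^T 0 x.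
pose Di : 'M[C]_m := diag_mx (\row_k (ext_norm k)^-1).
have Bm_inv : Bm *m (Bt *m Di) = 1%:M.
  rewrite mulmxA; apply/matrixP=> k1 k2; rewrite mul_mx_diag !mxE.
  under eq_bigr=> x _ do rewrite !mxE.
  rewrite sum_mxvec_mul.
  have -> : \sum_i0 \sum_j0 ext_basis k1 i0 j0 * (ext_basis k2)^T i0 j0
          = \tr (ext_basis k1 *m ext_basis k2).
    by apply: eq_bigr=> i0 _; rewrite mxE; apply: eq_bigr=> j0 _; rewrite mxE.
  rewrite ext_basis_gram; case: eqP=> [->|_]; last by rewrite !mul0r.
  rewrite mul1r mulfV // /ext_norm.
  by case: ifP=> _; [exact: natr_gt0_neq0 | exact: oner_neq0].
have := mulmx1C_eqdim ext_basis_card Bm_inv.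
move=> /matrixP /(_ (mxvec_index j i) (mxvec_index k l)).
rewrite !mxE /mxvec_index (inj_eq (@cast_ord_inj _ _ _)) (inj_eq (@enum_rank_inj _)).
rewrite -/(mxvec_index j i) -/(mxvec_index k l) xpair_eqE => <-.
rewrite mul_mx_diag big_ord_recr /=; congr (_ + _).
  apply: eq_bigr=> p _; rewrite !mxE widen_ordS_lift !mxvecE /ext_basis liftK !mxE.
  by rewrite /ext_norm eq_sym (negPf (neq_lift _ _)) invr1 mulr1.
rewrite !mxE !mxvecE /ext_basis unlift_none !mxE /ext_norm eqxx.
by rewrite mulrA [N%:R^-1 * _]mulrC.
Qed.

Lemma casimir_scalar : \sum_p b p *m b p = ((dimg N)%:R / N%:R)%:M.
Proof.
apply/matrixP=> a d; rewrite summxE !mxE.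
under eq_bigr=> p _ do rewrite mxE.
rewrite exchange_big /=.
have sum_bb c : \sum_p b p a c * b p c d
              = (a == d)%:R - N%:R^-1 * ((a == c)%:R * (c == d)%:R).
  by have := basis_completeness a c c d; rewrite eqxx /= => <-; rewrite addrK.
under eq_bigr=> c _ do rewrite sum_bb.
rewrite sumrB sumr_const card_ord -mulr_sumr (bigD1 a) //= big1 ?addr0; last first.
  by move=> c /negPf; rewrite eq_sym => ->; rewrite mul0r.
have dimgE : (dimg N)%:R = (N%:R ^+ 2 - 1 : C).
  by rewrite /dimg natrB ?natrX // expn_gt0 N_gt0.
rewrite eqxx mul1r dimgE; case: (a == d); last by rewrite mulr0 mul0rn subr0 mulr0n.
rewrite mulr1n mulr1 mulrBl expr2 mulfK ?natr_gt0_neq0 // mul1r.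
by rewrite -mulr_natr mulrC.
Qed.

End Completeness.

Section ReindexSums.
Variables (V : nmodType) (I : finType).

Lemma exchange_big3 (I1 I2 I3 : finType) (F : I1 -> I2 -> I3 -> V) :
  \sum_p \sum_s \sum_t F p s t = \sum_t \sum_p \sum_s F p s t.
Proof. by under eq_bigr=> p _ do rewrite exchange_big; rewrite exchange_big. Qed.

Lemma sum3_rot (F : I -> I -> I -> V) :
  \sum_q \sum_r \sum_s F q r s = \sum_q \sum_r \sum_s F r s q.
Proof. by rewrite [RHS]exchange_big /=; apply: eq_bigr=> r _; rewrite exchange_big. Qed.

Lemma sum4_swap14 (F : I -> I -> I -> I -> V) :
  \sum_q \sum_p \sum_s \sum_t F q p s t = \sum_q \sum_p \sum_s \sum_t F t p s q.
Proof.
under eq_bigr=> q _ do rewrite exchange_big3.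
under [RHS]eq_bigr=> q _ do rewrite exchange_big3.
by rewrite [RHS]exchange_big.
Qed.

Lemma sum4_swap23 (F : I -> I -> I -> I -> V) :
  \sum_q \sum_p \sum_s \sum_t F q p s t = \sum_q \sum_p \sum_s \sum_t F q s p t.
Proof. by apply: eq_bigr=> q _; rewrite exchange_big. Qed.

End ReindexSums.

Section NestedSums.
Variables (V : zmodType) (I : finType).

Lemma sum3B (F G : I -> I -> I -> V) :
  \sum_p \sum_q \sum_s (F p q s - G p q s)
  = \sum_p \sum_q \sum_s F p q s - \sum_p \sum_q \sum_s G p q s.
Proof.
rewrite -sumrB; apply: eq_bigr=> p _; rewrite -sumrB; apply: eq_bigr=> q _.
by rewrite -sumrB.
Qed.

Lemma sum4B (F G : I -> I -> I -> I -> V) :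
  \sum_p \sum_q \sum_s \sum_t (F p q s t - G p q s t)
  = \sum_p \sum_q \sum_s \sum_t F p q s t - \sum_p \sum_q \sum_s \sum_t G p q s t.
Proof. by rewrite -sumrB; apply: eq_bigr=> p _; rewrite sum3B. Qed.

Lemma sum4D (F G : I -> I -> I -> I -> V) :
  \sum_p \sum_q \sum_s \sum_t (F p q s t + G p q s t)
  = \sum_p \sum_q \sum_s \sum_t F p q s t + \sum_p \sum_q \sum_s \sum_t G p q s t.
Proof.
rewrite -big_split; apply: eq_bigr=> p _; rewrite -big_split; apply: eq_bigr=> q _.
by rewrite -big_split; apply: eq_bigr=> s _; rewrite -big_split.
Qed.

End NestedSums.

Lemma sum_kronecker (C : fieldType) (V : lmodType C) (I : finType) (F : I -> I -> V) c d :
  \sum_q \sum_r (c * ((q == r)%:R / d)) *: F q r = (c / d) *: \sum_q F q q.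
Proof.
rewrite scaler_sumr; apply: eq_bigr=> q _; rewrite (bigD1 q) //= big1 ?addr0.
  by rewrite eqxx mul1r.
by move=> r /negPf qr; rewrite eq_sym qr mul0r mulr0 scale0r.
Qed.

Section TraceCoordinates.
Variables (C : numClosedFieldType) (N : nat) (b : 'I_(dimg N) -> 'M[C]_N).

Definition ad_coord (M : 'M[C]_N) q p := \tr ((M *m b q - b q *m M) *m b p).

(* ad_field M p is the b_p-coordinate of [M, A] as a linear form in A; for
   traceless M, g_invariant f reads
   \sum_i M_i f = \sum_p ad_field M p * d f / d b_p. *)
Definition ad_field (M : 'M[C]_N) p : {mpoly C[dimg N]} :=
  \sum_q ad_coord M q p *: 'X_q.

Lemma ad_coordE M q p :
  ad_coord M q p = \tr (M *m b q *m b p) - \tr (b q *m M *m b p).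
Proof. by rewrite /ad_coord mulmxBl raddfB. Qed.

Lemma ad_coord_antisym M q p : ad_coord M q p = - ad_coord M p q.
Proof.
rewrite !ad_coordE -!mulmxA [\tr (b q *m _)]mxtrace_mulC.
by rewrite [\tr (b p *m _)]mxtrace_mulC !mulmxA opprB.
Qed.

Lemma mderiv_ad_field M r p : mderiv r (ad_field M p) = (ad_coord M r p)%:MP.
Proof.
rewrite /ad_field raddf_sum (bigD1 r) //= big1 ?addr0.
  by rewrite mderivZ mderiv_mpolyX eqxx mpolyC1 -mul_mpolyC mulr1.
by move=> q /negPf nq; rewrite mderivZ mderiv_mpolyX nq mpolyC0 scaler0.
Qed.

Lemma tr_mul4_rot (A B D E : 'M[C]_N) :
  \tr (A *m B *m D *m E) = \tr (E *m A *m B *m D).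
Proof. by rewrite mxtrace_mulC !mulmxA. Qed.

End TraceCoordinates.

(* Each sum vanishes because, once ad_coord is expanded into traces, a
   permutation of the summation indices and cyclicity of the trace exchange
   the two halves. *)
Section AdCoordSums.
Variables (C : numClosedFieldType) (N : nat) (b : 'I_(dimg N) -> 'M[C]_N).
Variable V : lmodType C.
Local Notation I := 'I_(dimg N).
Local Notation ad_coord := (ad_coord b).

Lemma sum_ad_coord_cyclic (E : I -> I -> I -> V)
    (E_cyclic : forall p q s, E p q s = E q s p) t :
  \sum_p \sum_q \sum_s ad_coord (b p *m b q) t s *: E p q s = 0.
Proof.
under eq_bigr=> p _ do under eq_bigr=> q _ do
  under eq_bigr=> s _ do rewrite ad_coordE scalerBl !mulmxA.
apply/eqP; rewrite sum3B subr_eq0 sum3_rot; apply/eqP.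
do 3! apply: eq_bigr=> ? _.
by rewrite [in LHS]tr_mul4_rot [in LHS]tr_mul4_rot -E_cyclic.
Qed.

Lemma sum_ad_coord_sym (D : I -> I -> V) (D_sym : forall p s, D p s = D s p) :
  \sum_p \sum_q \sum_s
    (ad_coord (b p *m b q) q s *: D p s + ad_coord (b p *m b q) p s *: D q s) = 0.
Proof.
under eq_bigr=> p _ do under eq_bigr=> q _ do rewrite big_split /=.
under eq_bigr=> p _ do rewrite big_split /=.
rewrite big_split /= [X in _ + X = _]exchange_big /= -big_split /=.
under eq_bigr=> p _ do rewrite -big_split /=.
under eq_bigr=> p _ do under eq_bigr=> q _ do rewrite -big_split /=.
rewrite (_ : \sum_p _ = \sum_p \sum_q \sum_s
   (\tr (b p *m b q *m b q *m b s) *: D p s - \tr (b q *m b q *m b p *m b s) *: D p s));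
  last first.
  do 3! apply: eq_bigr=> ? _; rewrite -scalerDl -scalerBl /ad_coord -raddfD -raddfB.
  by congr (\tr _ *: _); rewrite -mulmxDl -mulmxBl !mulmxA addrA subrK.
apply/eqP; rewrite sum3B subr_eq0; apply/eqP.
rewrite exchange_big [RHS]exchange_big /=; apply: eq_bigr=> q _.
rewrite exchange_big /=; do 2! apply: eq_bigr=> ? _.
by rewrite D_sym [in LHS]tr_mul4_rot [in LHS]tr_mul4_rot [in LHS]tr_mul4_rot.
Qed.

Lemma sum_ad_coord_anticomm (E : I -> I -> I -> I -> V)
    (E_sym14 : forall q p s t, E q p s t = E t p s q)
    (E_sym23 : forall q p s t, E q p s t = E q s p t) :
  \sum_q \sum_p \sum_s \sum_t ad_coord (b q *m b p + b p *m b q) t s *: E q p s t = 0.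
Proof.
rewrite (_ : \sum_q _ = \sum_q \sum_p \sum_s \sum_t
  ((\tr (b q *m b p *m b t *m b s) *: E q p s t - \tr (b t *m b p *m b q *m b s) *: E q p s t)
 + (\tr (b p *m b q *m b t *m b s) *: E q p s t - \tr (b t *m b q *m b p *m b s) *: E q p s t)));
  last first.
  do 4! apply: eq_bigr=> ? _; rewrite -!scalerBl -scalerDl; congr (_ *: _).
  rewrite /ad_coord mulmxBl !mulmxDl !mulmxDr !raddfB !raddfD /= !mulmxA.
  by rewrite mulmxDl raddfD /=; ring.
rewrite sum4D !sum4B.
have -> : \sum_q \sum_p \sum_s \sum_t \tr (b q *m b p *m b t *m b s) *: E q p s t
        = \sum_q \sum_p \sum_s \sum_t \tr (b t *m b p *m b q *m b s) *: E q p s t.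
  by rewrite sum4_swap14; do 4! apply: eq_bigr=> ? _; rewrite -E_sym14.
have -> : \sum_q \sum_p \sum_s \sum_t \tr (b t *m b q *m b p *m b s) *: E q p s t
        = \sum_q \sum_p \sum_s \sum_t \tr (b p *m b q *m b t *m b s) *: E q p s t.
  rewrite sum4_swap14 sum4_swap23; do 4! apply: eq_bigr=> ? _.
  by rewrite tr_mul4_rot E_sym14 -E_sym23.
by rewrite !subrr addr0.
Qed.

Lemma sum_ad_coord_anticomm_diag c (casimir : \sum_p b p *m b p = c%:M) q s :
  \sum_p ad_coord (b q *m b p + b p *m b q) p s = 0.
Proof.
rewrite /ad_coord -raddf_sum /= -mulmx_suml.
have -> : \sum_p ((b q *m b p + b p *m b q) *m b p - b p *m (b q *m b p + b p *m b q))
    = b q *m (\sum_p b p *m b p) - (\sum_p b p *m b p) *m b q.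
  rewrite mulmx_sumr mulmx_suml -sumrB; apply: eq_bigr=> p _.
  by rewrite mulmxDl mulmxDr !mulmxA opprD addrA addrK.
by rewrite casimir scalar_mxC subrr mul0mx raddf0.
Qed.

End AdCoordSums.

Lemma sum_cubic_ad_field (C : numClosedFieldType) N (b : 'I_(dimg N) -> 'M[C]_N) p :
  \sum_q \sum_r 'X_q * 'X_r * ad_field b (b q *m b r) p = 0 :> {mpoly C[dimg N]}.
Proof.
under eq_bigr=> q _ do under eq_bigr=> r _ do
  (rewrite /ad_field mulr_sumr;
   under eq_bigr=> s _ do rewrite -scalerAr ad_coord_antisym scaleNr; rewrite sumrN).
under eq_bigr=> q _ do rewrite sumrN.
rewrite sumrN (sum_ad_coord_cyclic b (E := fun q r s => 'X_q * 'X_r * 'X_s)) ?oppr0 //.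
by move=> q r s; ring.
Qed.

Section Generators.
Variables (C : numClosedFieldType) (N n : nat) (b : 'I_(dimg N) -> 'M[C]_N).
Local Notation T := (tens C N n).
Local Notation k := (N%:R / n%:R : C).

Lemma xop_sqr i (g : T) :
  xop b i (xop b i g) = \sum_q \sum_r mulP ('X_q * 'X_r) (actAt (b q *m b r) i g).
Proof.
apply: eq_bigr=> q _; rewrite actAt_sumr mulP_sumr; apply: eq_bigr=> r _.
by rewrite actAt_mulP mulPM actAtM.
Qed.

Lemma yop_sqr i (g : T) :
  yop b i (yop b i g) = (k * k) *: \sum_p \sum_q actAt (b p *m b q) i (dP p (dP q g)).
Proof.
rewrite /yop -scalerA; congr (_ *: _); rewrite [RHS]scaler_sumr; apply: eq_bigr=> p _.
rewrite !linearZ /=; congr (_ *: _); rewrite dP_sumr actAt_sumr; apply: eq_bigr=> q _.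
by rewrite -actAt_dP actAtM.
Qed.

Lemma xop_yop i (g : T) :
  xop b i (yop b i g) = k *: \sum_q \sum_p mulP 'X_q (actAt (b q *m b p) i (dP p g)).
Proof.
rewrite /xop /yop [RHS]scaler_sumr; apply: eq_bigr=> q _.
rewrite !linearZ /=; congr (_ *: _); rewrite actAt_sumr mulP_sumr; apply: eq_bigr=> p _.
by rewrite actAtM.
Qed.

(* The Casimir term comes from [d/d b_p, b_q] = delta_pq. *)
Lemma yop_xop i (g : T) :
  yop b i (xop b i g) = k *: (actAt (\sum_p b p *m b p) i g
    + \sum_q \sum_p mulP 'X_q (actAt (b p *m b q) i (dP p g))).
Proof.
rewrite /xop /yop; congr (_ *: _).
rewrite [X in _ = _ + X]exchange_big /= actAt_suml -big_split /=; apply: eq_bigr=> p _.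
rewrite dP_sumr actAt_sumr.
rewrite (eq_bigr (fun q => actAt (b p) i ((q == p)%:R *: actAt (b q) i g)
       + actAt (b p) i (mulP 'X_q (dP p (actAt (b q) i g))))); last first.
  by move=> q _; rewrite dP_mulP mderiv_mpolyX mulP_mpolyC linearD.
rewrite big_split /=; congr (_ + _).
  rewrite (bigD1 p) //= big1 ?addr0; first by rewrite eqxx linearZ /= scale1r actAtM.
  by move=> q /negPf nq; rewrite nq scale0r linear0.
by apply: eq_bigr=> q _; rewrite actAt_mulP -actAt_dP actAtM.
Qed.

End Generators.

Section Invariance.
Variables (C : numClosedFieldType) (N n : nat) (b : 'I_(dimg N) -> 'M[C]_N).
Hypotheses (N_gt0 : (0 < N)%N) (n_gt0 : (0 < n)%N) (b_tr : forall p, \tr (b p) = 0)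
  (b_orthonormal : forall p q, \tr (b p *m b q) = (p == q)%:R).
Variable f : tens C N n.
Hypothesis f_invariant : g_invariant b f.
Local Notation ad_coord := (ad_coord b).
Local Notation ad_field := (ad_field b).

(* Apply invariance to the traceless part of M. *)
Lemma sum_actAt_invariant M : \sum_i actAt M i f
  = (n%:R * (\tr M / N%:R)) *: f + \sum_p mulP (ad_field M p) (dP p f).
Proof.
pose c := \tr M / N%:R.
have trX : \tr (M - c%:M) = 0.
  rewrite raddfB /= mxtrace_scalar /c -[(\tr M / N%:R) *+ N]mulr_natr.
  by rewrite mulfVK ?natr_gt0_neq0 // subrr.
have := f_invariant trX.
have -> : \sum_i actAt (M - c%:M) i f = \sum_i actAt M i f - (c *: f) *+ n.
  rewrite (eq_bigr (fun i => actAt M i f - c *: f)); last first.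
    by move=> i _; rewrite actAtDl actAtNl actAt_scalar.
  by rewrite sumrB sumr_const card_ord.
have -> : \sum_p mulP (\sum_q \tr (((M - c%:M) *m b q - b q *m (M - c%:M)) *m b p)
                         *: 'X_q) (dP p f) = \sum_p mulP (ad_field M p) (dP p f).
  apply: eq_bigr=> p _; congr (mulP _ _); apply: eq_bigr=> q _.
  by congr (\tr (_ *m _) *: _); rewrite mulmxBl mulmxBr scalar_mxC opprB addrA subrK.
by move=> /eqP; rewrite subr_eq => /eqP ->; rewrite addrC -scaler_nat scalerA.
Qed.

Lemma sum_actAt_dP_invariant M p : \sum_i actAt M i (dP p f)
  = (n%:R * (\tr M / N%:R)) *: dP p f
  + \sum_s (ad_coord M p s *: dP s f + mulP (ad_field M s) (dP p (dP s f))).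
Proof.
under eq_bigr=> i _ do rewrite actAt_dP.
rewrite -dP_sumr sum_actAt_invariant linearD linearZ /= dP_sumr.
by congr (_ + _); apply: eq_bigr=> s _; rewrite dP_mulP mderiv_ad_field mulP_mpolyC.
Qed.

Lemma sum_actAt_dP2_invariant M p q : \sum_i actAt M i (dP p (dP q f))
  = (n%:R * (\tr M / N%:R)) *: dP p (dP q f)
  + \sum_s (ad_coord M q s *: dP p (dP s f) + (ad_coord M p s *: dP q (dP s f)
              + mulP (ad_field M s) (dP p (dP q (dP s f))))).
Proof.
under eq_bigr=> i _ do rewrite actAt_dP.
rewrite -dP_sumr sum_actAt_dP_invariant linearD linearZ /= dP_sumr; congr (_ + _).
apply: eq_bigr=> s _.
by rewrite linearD linearZ /= dP_mulP mderiv_ad_field mulP_mpolyC.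
Qed.

Lemma sum_actAt_quadratic :
  \sum_q \sum_r mulP ('X_q * 'X_r) (\sum_i actAt (b q *m b r) i f)
  = (n%:R / N%:R) *: \sum_q mulP ('X_q * 'X_q) f.
Proof.
under eq_bigr=> q _ do under eq_bigr=> r _ do
  rewrite sum_actAt_invariant b_orthonormal linearD linearZ /=.
under eq_bigr=> q _ do rewrite big_split /=.
rewrite big_split /= sum_kronecker [X in _ + X](_ : _ = 0) ?addr0 //.
under eq_bigr=> q _ do under eq_bigr=> r _ do
  (rewrite mulP_sumr; under eq_bigr=> p _ do rewrite mulPM).
rewrite exchange_big3 big1 // => p _.
under eq_bigr=> q _ do rewrite -mulP_suml.
by rewrite -mulP_suml sum_cubic_ad_field mulP0l.
Qed.

Lemma fop_eq : fop b f = (n%:R / N%:R) *: Fop f.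
Proof.
rewrite /fop /Fop; under eq_bigr=> i _ do rewrite xop_sqr.
rewrite exchange_big /=; under eq_bigr=> q _ do rewrite exchange_big /=.
under eq_bigr=> q _ do under eq_bigr=> r _ do rewrite -mulP_sumr.
by rewrite sum_actAt_quadratic !scalerA mulrC.
Qed.

Lemma sum_actAt_dP2 :
  \sum_p \sum_q \sum_i actAt (b p *m b q) i (dP p (dP q f))
  = (n%:R / N%:R) *: \sum_p dP p (dP p f).
Proof.
under eq_bigr=> p _ do under eq_bigr=> q _ do
  (rewrite sum_actAt_dP2_invariant b_orthonormal;
   under eq_bigr=> s _ do rewrite addrA; rewrite big_split /= addrA).
under eq_bigr=> p _ do rewrite !big_split /=.
rewrite !big_split /= sum_kronecker.
rewrite (sum_ad_coord_sym b (D := fun p s => dP p (dP s f))) ?addr0; last first.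
  by move=> p s; rewrite dP_comm.
rewrite [X in _ + X](_ : _ = 0) ?addr0 //.
under eq_bigr=> p _ do under eq_bigr=> q _ do under eq_bigr=> s _ do
  (rewrite mulP_suml; under eq_bigr=> t _ do rewrite mulPZl).
under eq_bigr=> p _ do rewrite exchange_big3.
rewrite exchange_big /= big1 // => t _.
apply: (sum_ad_coord_cyclic b (E := fun p q s => mulP 'X_t (dP p (dP q (dP s f))))).
by move=> p q s; rewrite dP_comm [dP p (dP s f)]dP_comm.
Qed.

Lemma eop_eq : eop b f = (N%:R / n%:R) *: Eop f.
Proof.
rewrite /eop /Eop; under eq_bigr=> i _ do rewrite yop_sqr.
rewrite -scaler_sumr exchange_big /=; under eq_bigr=> p _ do rewrite exchange_big /=.
rewrite sum_actAt_dP2 !scalerA; congr (_ *: _).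
by field; rewrite !natr_gt0_neq0.
Qed.

Lemma sum_actAt_anticomm_dP :
  \sum_q \sum_p \sum_i mulP 'X_q (actAt (b q *m b p + b p *m b q) i (dP p f))
  = (2 * n%:R / N%:R) *: \sum_q mulP 'X_q (dP q f).
Proof.
under eq_bigr=> q _ do under eq_bigr=> p _ do
  (rewrite -mulP_sumr sum_actAt_dP_invariant mxtraceD !b_orthonormal linearD linearZ /=;
   rewrite mulP_sumr; under eq_bigr=> s _ do rewrite linearD linearZ /= mulPM;
   rewrite big_split /= addrA).
under eq_bigr=> q _ do rewrite !big_split /=.
rewrite !big_split /=.
have casimir := casimir_scalar N_gt0 b_tr b_orthonormal.
rewrite [X in _ + X + _]big1 ?addr0 => [|q _]; last first.
  rewrite exchange_big /= big1 // => s _.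
  by rewrite -scaler_suml (sum_ad_coord_anticomm_diag casimir) scale0r.
rewrite [X in _ + X](_ : _ = 0) ?addr0; last first.
  pose E q p s t := mulP ('X_q * 'X_t) (dP p (dP s f)).
  have E_sym14 q p s t : E q p s t = E t p s q by rewrite /E mulrC.
  have E_sym23 q p s t : E q p s t = E q s p t by rewrite /E dP_comm.
  rewrite -[RHS](sum_ad_coord_anticomm b E_sym14 E_sym23); do 3! apply: eq_bigr=> ? _.
  by rewrite mulr_sumr mulP_suml; apply: eq_bigr=> t _; rewrite -scalerAr mulPZl.
rewrite scaler_sumr; apply: eq_bigr=> q _; rewrite (bigD1 q) //= big1 ?addr0.
  by rewrite eqxx -natrD mulrA [n%:R * _]mulrC.
by move=> p /negPf np; rewrite eq_sym np addr0 mul0r mulr0 scale0r.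
Qed.

Lemma hop_eq : hop b f = Hop f.
Proof.
set k := (N%:R / n%:R : C).
have xy_yx i : xop b i (yop b i f) + yop b i (xop b i f)
    = k *: (actAt (\sum_p b p *m b p) i f
      + \sum_q \sum_p mulP 'X_q (actAt (b q *m b p + b p *m b q) i (dP p f))).
  rewrite xop_yop yop_xop -scalerDr addrCA; congr (_ *: (_ + _)).
  rewrite -big_split; apply: eq_bigr=> q _; rewrite -big_split; apply: eq_bigr=> p _.
  by rewrite actAtDl linearD.
rewrite /hop /Hop; under eq_bigr=> i _ do
  rewrite xy_yx (casimir_scalar N_gt0 b_tr b_orthonormal) actAt_scalar.
rewrite -scaler_sumr big_split /= sumr_const card_ord.
rewrite -(exchange_big3
  (fun q p i => mulP 'X_q (actAt (b q *m b p + b p *m b q) i (dP p f)))).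
rewrite sum_actAt_anticomm_dP -scaler_nat !scalerA !scalerDr !scalerA addrC.
congr (_ + _); last congr (_ *: _); rewrite /k.
- by rewrite -[RHS]scale1r; congr (_ *: _); field; rewrite !natr_gt0_neq0.
- by field; rewrite !natr_gt0_neq0.
Qed.

End Invariance.

Unset Implicit Arguments. Set Strict Implicit.

Theorem mainTheorem14 (C : numClosedFieldType) (N n : nat)
  (b : 'I_(dimg N) -> 'M[C]_N)
  (hN : (0 < N)%N) (hn : (0 < n)%N) (hNn : (N %| n)%N)
  (hb_tr : forall p, \tr (b p) = 0)
  (hb_on : forall p q, \tr (b p *m b q) = (p == q)%:R)
  (f : tens C N n) (hf : g_invariant b f) :
  [/\ hop b f = Hop f,
      eop b f = (N%:R / n%:R : C) *: Eop f
    & fop b f = (n%:R / N%:R : C) *: Fop f].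
Proof.
split; [exact: hop_eq | exact: eop_eq | exact: fop_eq].
Qed.
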